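(* Let $p$ be a prime. For integers $s,j\ge1$ with $p\nmid s$, let $\rho_{s,j}$ be the unique root of $X^2-sX+p^j$ which is a $p$-adic unit (with respect to the fixed embedding $\bar{\mathbb Q}\hookrightarrow\bar{\mathbb Q}_p$). Let $\mathbf e=\{e(s,j)\}$ be a nonempty finite collection of positive integers indexed by pairs $(s,j)$ of integers with $s,j\ge1$, $p\nmid s$ and $1\le s<2p^{j/2}$. Then $\rho_{\mathbf e}:=\prod_{s,j}\rho_{s,j}^{e(s,j)}$ is not a root of unity.
   Context: A fixed embedding $\bar{\mathbb Q}\hookrightarrow\bar{\mathbb Q}_p$ is used to decide which root of $X^2-sX+p^j$ is a $p$-adic unit. *)

From HB Require Import structures.
From mathcomp Require Import all_boot all_order all_algebra all_field.
Set Implicit Arguments. Unset Strict Implicit. Unset Printing Implicit Defensive.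
Import Order.TTheory GRing.Theory Num.Theory.
Local Open Scope ring_scope.

(* A fixed embedding Qbar -> Qbar_p is encoded by the absolute value it induces
   on Qbar (= algC): a non-archimedean absolute value on algC extending the
   normalized p-adic absolute value of Q (|p|_p = 1/p).  Its values p^(rational)
   are real algebraic numbers, so we let it take values in algC. *)
Definition padic_abs (p : nat) (v : algC -> algC) : Prop :=
  [/\ forall x, 0 <= v x,
      forall x, v x = 0 <-> x = 0,
      forall x y, v (x * y) = v x * v y,
      forall x y, v (x + y) <= Num.max (v x) (v y)
    & v p%:R = (p%:R)^-1].

Definition padic_unit (v : algC -> algC) (x : algC) : Prop := v x = 1.

Definition admissible (p s j : nat) : bool :=
  [&& (0 < s)%N, (0 < j)%N, ~~ (p %| s)%N & (s ^ 2 < 4 * p ^ j)%N].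

From HB Require Import structures.
From mathcomp Require Import all_boot all_order all_algebra all_field.
From mathcomp Require Import ring.

Set Implicit Arguments.
Unset Strict Implicit.
Unset Printing Implicit Defensive.
Import Order.TTheory GRing.Theory Num.Theory.
Local Open Scope ring_scope.

(* For an admissible (s, j) the discriminant s^2 - 4 p^j is negative, so the
   two roots of X^2 - sX + p^j are complex conjugate and each has complex
   absolute value p^(j/2) > 1.  A product of positive powers of such numbers
   has absolute value > 1, whereas every root of unity has absolute value 1. *)

Section QuadraticRoot.

Variables (C : numClosedFieldType) (s q r : C).
Hypotheses (s_real : s \is Num.real) (q_real : q \is Num.real).
Hypothesis disc_lt0 : s ^+ 2 < 4 * q.
Hypothesis r_root : r ^+ 2 - s * r + q = 0.

Lemma quadratic_root_nonreal : r \isn't Num.real.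
Proof.
apply/negP => r_real.
have sqr_eq : (2 * r - s) ^+ 2 = s ^+ 2 - 4 * q.
  by apply/eqP; rewrite -subr_eq0 -(mulr0 4) -r_root; apply/eqP; ring.
have : 0 <= (2 * r - s) ^+ 2 by rewrite -realEsqr rpredB ?rpredM ?rpred_nat.
by rewrite sqr_eq subr_ge0 => /(lt_le_trans disc_lt0); rewrite ltxx.
Qed.

Lemma quadratic_root_conj : r^* = s - r.
Proof.
have conj_root : r^* ^+ 2 - s * r^* + q = 0.
  by rewrite -(conj_Creal s_real) -(conj_Creal q_real) -rmorphXn -rmorphM
    -rmorphB -rmorphD r_root rmorph0.
have : (r - r^*) * (r + r^* - s) = 0.
  have -> : (r - r^*) * (r + r^* - s) =
    (r ^+ 2 - s * r + q) - (r^* ^+ 2 - s * r^* + q) by ring.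
  by rewrite r_root conj_root subrr.
move/eqP; rewrite mulf_eq0 subr_eq0 eq_sym -CrealE (negbTE quadratic_root_nonreal).
move=> /= /eqP sum_eq; apply/eqP; rewrite -subr_eq0 -sum_eq; apply/eqP; ring.
Qed.

Lemma quadratic_root_normCK : `|r| ^+ 2 = q.
Proof.
rewrite normCK quadratic_root_conj.
by apply/eqP; rewrite -subr_eq0 -oppr_eq0 -r_root; apply/eqP; ring.
Qed.

End QuadraticRoot.

Lemma admissible_root_norm_gt1 (p s j : nat) (r : algC) :
  prime p -> admissible p s j -> r ^+ 2 - s%:R * r + (p ^ j)%:R = 0 ->
  1 < `|r|.
Proof.
move=> p_prime /and4P[_ j_gt0 _ s_lt] r_root.
have disc_lt0 : s%:R ^+ 2 < 4 * (p ^ j)%:R :> algC.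
  by rewrite -natrX -natrM ltr_nat.
rewrite -(expr_gt1 (n := 2)) //.
rewrite (@quadratic_root_normCK _ s%:R (p ^ j)%:R r) ?rpred_nat // ltr1n.
by rewrite -{1}(expn0 p) ltn_exp2l ?prime_gt1.
Qed.

Lemma prodr_ge1 (R : numDomainType) (I : eqType) (r : seq I) (F : I -> R) :
  {in r, forall i, 1 <= F i} -> 1 <= \prod_(i <- r) F i.
Proof.
move=> F_ge1; rewrite big_seq.
by apply: (big_ind (fun x => 1 <= x)) => // x y; apply: (mulr_egte1 _).1.
Qed.

Lemma prodr_gt1 (R : numDomainType) (I : eqType) (r : seq I) (F : I -> R) :
  r != [::] -> {in r, forall i, 1 < F i} -> 1 < \prod_(i <- r) F i.
Proof.
case: r => [//|a r] _ F_gt1; rewrite big_cons.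
have Fa_gt1 : 1 < F a by rewrite F_gt1 ?mem_head.
apply: (lt_le_trans Fa_gt1); rewrite ler_peMr ?(ltW (lt_trans ltr01 Fa_gt1)) //.
by apply: prodr_ge1 => i i_r; rewrite ltW // F_gt1 // inE i_r orbT.
Qed.

Lemma norm_expr_eq1 (R : numDomainType) (n : nat) (x : R) :
  (0 < n)%N -> x ^+ n = 1 -> `|x| = 1.
Proof.
by move=> n_gt0 xn1; apply/eqP; rewrite -(pexpr_eq1 n_gt0) // -normrX xn1 normr1.
Qed.

Theorem lemma2p3 (p : nat) (v : algC -> algC)
  (idx : seq (nat * nat)) (e : nat -> nat -> nat) (rho : nat -> nat -> algC) :
  prime p -> padic_abs p v ->
  idx != [::] -> uniq idx ->
  (forall sj, sj \in idx -> admissible p sj.1 sj.2) ->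
  (forall sj, sj \in idx -> (0 < e sj.1 sj.2)%N) ->
  (forall sj, sj \in idx ->
     (rho sj.1 sj.2) ^+ 2 - (sj.1)%:R * rho sj.1 sj.2 + (p ^ sj.2)%:R = 0
     /\ padic_unit v (rho sj.1 sj.2)) ->
  ~ (exists n : nat, (0 < n)%N /\
       (\prod_(sj <- idx) (rho sj.1 sj.2) ^+ (e sj.1 sj.2)) ^+ n = 1).
Proof.
move=> p_prime _ idx_ne0 _ adm e_gt0 root [n [n_gt0 unity]].
have factor_gt1 : {in idx, forall sj, 1 < `|rho sj.1 sj.2 ^+ e sj.1 sj.2|}.
  move=> sj sj_idx.
  rewrite normrX exprn_egt1 -?lt0n ?e_gt0 //.
  exact: admissible_root_norm_gt1 p_prime (adm _ sj_idx) (root _ sj_idx).1.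
have := prodr_gt1 idx_ne0 factor_gt1.
by rewrite -normr_prod (norm_expr_eq1 n_gt0 unity) ltxx.
Qed.
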